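(* Let $G$ be a graph with a pendant vertex $p$, let $v$ be the neighbor of $p$, and let $G'$ be the subgraph of $G$ induced by $V(G)\setminus\{p,v\}$. (1) $G$ is $A$-AW if and only if $G'$ is $A$-AW. (2) Let $r$ be the smallest positive integer such that $T_{V(G)}^{A(G)}(r)\ne\emptyset$, and let $t\in T_{V(G)}^{A(G)}(r)$. Then $\overline{G}$ is $N$-AW if and only if both of the following hold: (a) for every labeling $\pi$ of $V(G)$ there exists $s\in\mathbb{Z}_\ell$ such that the labeling $\pi_s$ is winnable in the adjacency Lights Out game on $G$; (b) for every $z\in\mathbb{Z}_\ell$ there exists $q\in T_{V(G)}^{A(G)}(0)$ such that the congruence $(r+t)x\equiv z+q \pmod{\ell}$ has a solution $x$.
   Context: All graphs are finite and simple; $\overline{G}$ is the complement. Fix an integer $\ell\ge2$; labelings are maps $V(G)\to\mathbb{Z}_\ell$. In the neighborhood Lights Out game, toggling a vertex $w$ adds $1$ (mod $\ell$) to the label of each vertex of the closed neighborhood $N[w]$; in the adjacency Lights Out game, toggling $w$ adds $1$ to the label of each vertex of the open neighborhood $N(w)$. A game is won when all labels are $0$; a labeling is winnable if the game starting from it can be won. A graph is $N$-AW (resp. $A$-AW) if every labeling is winnable in the neighborhood (resp. adjacency) game. For a labeling $\pi$ and $s\in\mathbb{Z}_\ell$, $\pi_s$ is the labeling $\pi_s(w)=\pi(w)+s$ for all $w$. For $U\subseteq V(G)$ and $r\in\mathbb{Z}_\ell$, the set of toggling numbers $T_U^{A(G)}(r)\subseteq\mathbb{Z}_\ell$ consists of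 all $t$ such that the adjacency game on $G$ starting from the labeling that is $r$ on $U$ and $0$ elsewhere can be won by a sequence of toggles in which the vertices of $U$ are toggled a total of $t$ times (mod $\ell$). *)

From HB Require Import structures.
From mathcomp Require Import all_boot all_order all_algebra.
Set Implicit Arguments. Unset Strict Implicit. Unset Printing Implicit Defensive.
Import GRing.Theory.
Local Open Scope ring_scope.

(* A simple graph: vertex type T : finType, adjacency e : rel T,
   assumed symmetric and irreflexive in the theorem.
   Labels live in 'Z_l (with the hypothesis 1 < l). *)

Section LightsOut.
Variables (l : nat) (T : finType) (e : rel T).

Definition adj_toggle (pi : T -> 'Z_l) (w : T) : T -> 'Z_l :=
  fun u => pi u + (e w u)%:R.

Definition nbhd_toggle (pi : T -> 'Z_l) (w : T) : T -> 'Z_l :=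
  fun u => pi u + ((u == w) || e w u)%:R.

Definition A_play (s : seq T) (pi : T -> 'Z_l) : T -> 'Z_l :=
  foldl adj_toggle pi s.
Definition N_play (s : seq T) (pi : T -> 'Z_l) : T -> 'Z_l :=
  foldl nbhd_toggle pi s.

Definition A_winnable (pi : T -> 'Z_l) : Prop :=
  exists s : seq T, forall u, A_play s pi u = 0.
Definition N_winnable (pi : T -> 'Z_l) : Prop :=
  exists s : seq T, forall u, N_play s pi u = 0.

Definition A_AW : Prop := forall pi : T -> 'Z_l, A_winnable pi.
Definition N_AW : Prop := forall pi : T -> 'Z_l, N_winnable pi.

Definition shift_lab (pi : T -> 'Z_l) (s : 'Z_l) : T -> 'Z_l :=
  fun w => pi w + s.

Definition lab_on (U : {set T}) (r : 'Z_l) : T -> 'Z_l :=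
  fun u => if u \in U then r else 0.

Definition in_TogNum (U : {set T}) (r t : 'Z_l) : Prop :=
  exists s : seq T, (forall u, A_play s (lab_on U r) u = 0) /\
                    (count (mem U) s)%:R = t.

End LightsOut.

Definition compl_rel (T : finType) (e : rel T) : rel T :=
  fun x y => (x != y) && ~~ e x y.

Definition del2 (T : finType) (p v : T) : finType :=
  {x : T | (x != p) && (x != v)}.
Definition induced_del2 (T : finType) (e : rel T) (p v : T) : rel (del2 p v) :=
  fun x y => e (val x) (val y).
Arguments induced_del2 {T} e p v.
Arguments A_winnable l {T} e pi.
Arguments N_winnable l {T} e pi.
Arguments in_TogNum l {T} e U r t.
Arguments A_AW l {T} e.
Arguments N_AW l {T} e.

From mathcomp Require Import all_boot all_order all_algebra.
From mathcomp Require Import ring.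

(* Both games are linear systems over Z_l: toggling w in the adjacency game adds
   the column of w of the adjacency matrix A, so pi is winnable iff
   pi + A x = 0 for some toggle vector x. In the neighborhood game on the
   complement, N[w] there is V minus N(w), so pi is winnable iff
   pi + (sum x) 1 - A x = 0.
   (1) The row of the pendant vertex p reads x v = -pi p, and the row of v can be
   satisfied by choosing x p, since p occurs in no other row; what remains is the
   system of G' with a modified right-hand side.
   (2) If A y is the constant c, then c is a multiple of r, since otherwise
   r' = c mod r would be a smaller positive value with T(r') nonempty. Writing
   the solution for a labeling as a solution for pi_s plus a correction for a
   constant labeling turns the complement game into conditions (a) and (b). *)

Set Implicit Arguments. Unset Strict Implicit. Unset Printing Implicit Defensive.
Import GRing.Theory.
Local Open Scope ring_scope.

Lemma foldl_toggleE (T : Type) (V : nmodType) (f : T -> T -> V) (s : seq T)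
    (pi : T -> V) u :
  foldl (fun pi w u => pi u + f w u) pi s u = pi u + \sum_(w <- s) f w u.
Proof.
elim: s pi => [|w s IHs] pi /=; first by rewrite big_nil addr0.
by rewrite IHs big_cons addrA.
Qed.

Section SeqSums.
Variables (T : finType) (R : pzSemiRingType).

Lemma sum_seq_count (s : seq T) (F : T -> R) :
  \sum_(w <- s) F w = \sum_w (count_mem w s)%:R * F w.
Proof.
elim: s => [|a s IHs]; first by rewrite big_nil big1 // => w _; rewrite mul0r.
rewrite big_cons IHs /=.
under [RHS]eq_bigr do rewrite natrD mulrDl mulr_natl mulrb.
rewrite big_split /= -big_mkcond /=; congr (_ + _).
by rewrite (big_pred1 a) // => w; rewrite eq_sym.
Qed.

Lemma count_setT (s : seq T) : (count (mem [set: T]) s)%:R = \sum_(w <- s) 1 :> R.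
Proof.
rewrite -sum1_count natr_sum big_mkcond.
by apply: eq_bigr => w _ /=; rewrite in_setT.
Qed.

End SeqSums.

Definition toggle_seq (l : nat) (T : finType) (x : T -> 'Z_l) : seq T :=
  flatten [seq nseq (x w) w | w <- enum T].

Lemma sum_toggle_seq (l : nat) (T : finType) (x F : T -> 'Z_l) :
  \sum_(w <- toggle_seq x) F w = \sum_w x w * F w.
Proof.
rewrite big_flatten /= big_map big_enum; apply: eq_bigr => w _.
by rewrite big_nseq iter_addr_0 -mulr_natl natr_Zp.
Qed.

Section AdjacencyMatrix.
Variables (R : pzRingType) (T : finType) (e : rel T).

Definition adjmul (x : T -> R) (u : T) : R := \sum_w x w * (e w u)%:R.

Lemma adjmulD (x1 x2 : T -> R) u :
  adjmul (fun w => x1 w + x2 w) u = adjmul x1 u + adjmul x2 u.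
Proof. by rewrite -big_split; apply: eq_bigr => w _; rewrite mulrDl. Qed.

Lemma adjmulN (x : T -> R) u : adjmul (fun w => - x w) u = - adjmul x u.
Proof. by rewrite -sumrN; apply: eq_bigr => w _; rewrite mulNr. Qed.

Lemma adjmulZ (k : R) (x : T -> R) u :
  adjmul (fun w => k * x w) u = k * adjmul x u.
Proof. by rewrite mulr_sumr; apply: eq_bigr => w _; rewrite mulrA. Qed.

Lemma eq_adjmul (x1 x2 : T -> R) : x1 =1 x2 -> adjmul x1 =1 adjmul x2.
Proof. by move=> E u; apply: eq_bigr => w _; rewrite E. Qed.

Hypothesis eirr : irreflexive e.

Lemma compl_nbhd_effect (w u : T) :
  ((u == w) || compl_rel e w u)%:R = 1 - (e w u)%:R :> R.
Proof.
rewrite /compl_rel; have [->|_] := eqVneq u w; first by rewrite eirr subr0.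
by case: (e w u); rewrite ?subrr ?subr0.
Qed.

Lemma sum_compl_nbhd_effect (x : T -> R) u :
  \sum_w x w * ((u == w) || compl_rel e w u)%:R = \sum_w x w - adjmul x u.
Proof.
by rewrite -sumrB; apply: eq_bigr => w _; rewrite compl_nbhd_effect mulrBr mulr1.
Qed.

End AdjacencyMatrix.

Section LinearSystems.
Variables (l : nat) (T : finType) (e : rel T).
Local Notation Z := 'Z_l.

Definition count_vec (s : seq T) (w : T) : Z := (count_mem w s)%:R.

Lemma A_playE (s : seq T) (pi : T -> Z) u :
  A_play e s pi u = pi u + adjmul e (count_vec s) u.
Proof. by rewrite [LHS](foldl_toggleE (fun w u => (e w u)%:R)) sum_seq_count. Qed.

Lemma A_play_toggle_seq (x : T -> Z) (pi : T -> Z) u :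
  A_play e (toggle_seq x) pi u = pi u + adjmul e x u.
Proof.
by rewrite [LHS](foldl_toggleE (fun w u => (e w u)%:R)) sum_toggle_seq.
Qed.

Lemma A_winnableP (pi : T -> Z) :
  A_winnable l e pi <-> exists x, forall u, pi u + adjmul e x u = 0.
Proof.
split=> [[s Hs]|[x Hx]].
  by exists (count_vec s) => u; rewrite -(Hs u) A_playE.
by exists (toggle_seq x) => u; rewrite A_play_toggle_seq.
Qed.

Lemma in_TogNum_setTP (r t : Z) :
  in_TogNum l e [set: T] r t <->
  exists x, (forall u, r + adjmul e x u = 0) /\ \sum_w x w = t.
Proof.
have labT u : lab_on [set: T] r u = r by rewrite /lab_on in_setT.
split=> [[s [Hs <-]]|[x [Hx <-]]].
  exists (count_vec s); split; first by move=> u; rewrite -(Hs u) A_playE labT.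
  by rewrite count_setT [RHS]sum_seq_count; apply: eq_bigr => w _; rewrite mulr1.
exists (toggle_seq x); split; first by move=> u; rewrite A_play_toggle_seq labT.
by rewrite count_setT [LHS]sum_toggle_seq; apply: eq_bigr => w _; rewrite mulr1.
Qed.

Lemma N_winnable_complP (eirr : irreflexive e) (pi : T -> Z) :
  N_winnable l (compl_rel e) pi <->
  exists x, forall u, pi u + (\sum_w x w - adjmul e x u) = 0.
Proof.
pose f w u := ((u == w) || compl_rel e w u)%:R : Z.
split=> [[s Hs]|[x Hx]].
  exists (count_vec s) => u; rewrite -[RHS](Hs u) [RHS](foldl_toggleE f).
  by rewrite [in RHS]sum_seq_count sum_compl_nbhd_effect.
exists (toggle_seq x) => u; rewrite [LHS](foldl_toggleE f).
by rewrite sum_toggle_seq sum_compl_nbhd_effect.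
Qed.

End LinearSystems.

Lemma sum_del2 (R : nmodType) (T : finType) (p v : T) (F : T -> R) : p != v ->
  \sum_w F w = F p + F v + \sum_(y : del2 p v) F (val y).
Proof.
move=> npv; rewrite (bigD1 p) //= (bigD1 v) 1?eq_sym //= addrA; congr (_ + _).
rewrite (reindex_omap (val : del2 p v -> T) insub); last first.
  by move=> w /andP[wp wv]; rewrite insubT // wp wv.
by apply: eq_bigl => y /=; rewrite valK eqxx andbT (valP y).
Qed.

Section PendantVertex.
Variables (l : nat) (T : finType) (e : rel T).
Hypotheses (esym : symmetric e) (eirr : irreflexive e).
Variables (p v : T).
Hypotheses (epv : e p v) (p_pendant : forall w, e p w -> w = v).
Local Notation Z := 'Z_l.
Local Notation G' := (induced_del2 e p v).

Lemma pendant_neq : p != v.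
Proof. by apply: contraTneq epv => ->; rewrite eirr. Qed.

Lemma adjmul_pendant (x : T -> Z) : adjmul e x p = x v.
Proof.
rewrite /adjmul (bigD1 v) //= esym epv mulr1 big1 ?addr0 // => w nwv.
have epw : e p w = false by apply: contraNF nwv => /p_pendant ->.
by rewrite esym epw mulr0.
Qed.

Lemma adjmul_del2 (x : T -> Z) (y : del2 p v) :
  adjmul e x (val y) = x v * (e v (val y))%:R + adjmul G' (fun z => x (val z)) y.
Proof.
have npy : e p (val y) = false.
  by apply: contraTF (valP y) => /p_pendant ->; rewrite eqxx andbF.
by rewrite /adjmul (sum_del2 _ pendant_neq) npy mulr0 add0r.
Qed.

Definition extend_del2 (x' : del2 p v -> Z) (a_p a_v : Z) (w : T) : Z :=
  if insub w is Some y then x' y else if w == v then a_v else a_p.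

Lemma extend_del2_val x' a_p a_v (y : del2 p v) :
  extend_del2 x' a_p a_v (val y) = x' y.
Proof. by rewrite /extend_del2 valK. Qed.

Lemma extend_del2_v x' a_p a_v : extend_del2 x' a_p a_v v = a_v.
Proof. by rewrite /extend_del2 insubF ?eqxx // andbF. Qed.

Lemma extend_del2_p x' a_p a_v : extend_del2 x' a_p a_v p = a_p.
Proof. by rewrite /extend_del2 insubF ?eqxx // (negbTE pendant_neq). Qed.

Lemma A_AW_del2 : A_AW l e -> A_AW l G'.
Proof.
move=> AW b'; apply/A_winnableP.
case/A_winnableP: (AW (extend_del2 b' 0 0)) => x Hx.
have xv : x v = 0 by have := Hx p; rewrite adjmul_pendant extend_del2_p add0r.
exists (fun z => x (val z)) => y.
by have := Hx (val y); rewrite adjmul_del2 xv mul0r add0r extend_del2_val.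
Qed.

Lemma A_AW_of_del2 : A_AW l G' -> A_AW l e.
Proof.
move=> AW' b; apply/A_winnableP.
pose b' (y : del2 p v) := b (val y) - b p * (e v (val y))%:R.
case/A_winnableP: (AW' b') => x' Hx'.
pose xp := - (b v + \sum_y x' y * (e (val y) v)%:R).
have x'E : (fun z => extend_del2 x' xp (- b p) (val z)) =1 x'.
  by move=> z; rewrite extend_del2_val.
exists (extend_del2 x' xp (- b p)) => u.
have [->|nup] := eqVneq u p; first by rewrite adjmul_pendant extend_del2_v subrr.
have [->|nuv] := eqVneq u v.
  rewrite /adjmul (sum_del2 _ pendant_neq) epv eirr mulr1 mulr0 addr0.
  rewrite extend_del2_p (eq_bigr (fun y => x' y * (e (val y) v)%:R)) => [|y _].
    by rewrite /xp opprD subrK addrN.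
  by rewrite extend_del2_val.
have uy : (u != p) && (u != v) by rewrite nup nuv.
rewrite -[u]/(val (Sub u uy : del2 p v)) adjmul_del2 extend_del2_v.
by rewrite (eq_adjmul _ x'E) mulNr addrA; apply: Hx'.
Qed.

End PendantVertex.

Section ComplementNeighborhoodGame.
Variables (l : nat) (T : finType) (e : rel T).
Hypothesis eirr : irreflexive e.
Local Notation Z := 'Z_l.

Lemma shift_winnable_of_N_AW_compl :
  N_AW l (compl_rel e) -> forall pi, exists s, A_winnable l e (shift_lab pi s).
Proof.
move=> AW pi; case/(N_winnable_complP eirr): (AW pi) => x Hx.
exists (\sum_w x w); apply/A_winnableP; exists (fun w => - x w) => u.
by rewrite adjmulN /shift_lab -addrA; apply: Hx.
Qed.

Variables (r : nat) (t : Z).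
Hypothesis r_gt0 : (0 < r)%N.
Hypothesis r_min : forall r' : nat, (0 < r')%N -> (r' < r)%N ->
  ~ exists t0, in_TogNum l e [set: T] r'%:R t0.
Hypothesis Tr : in_TogNum l e [set: T] r%:R t.

Lemma adjmul_const_mulr (c : Z) (y : T -> Z) :
  (forall u, adjmul e y u = c) -> exists m, c = m * r%:R.
Proof.
move=> Ay; case/in_TogNum_setTP: Tr => x0 [Ax0 _].
have := ltn_pmod c r_gt0; have := divn_eq c r.
move: (c %/ r)%N (c %% r)%N => a b cab b_lt_r.
have {cab} cE : c = a%:R * r%:R + b%:R by rewrite -natrM -natrD -cab natr_Zp.
have [b0|b_gt0] := posnP b; first by exists a%:R; rewrite cE b0 addr0.
case: (r_min b_gt0 b_lt_r).
pose y' w := - y w - a%:R * x0 w.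
exists (\sum_w y' w); apply/in_TogNum_setTP; exists y'; split=> // u.
rewrite adjmulD !adjmulN adjmulZ Ay -(addr0_eq (Ax0 u)) cE; ring.
Qed.

Lemma congr_of_N_AW_compl : N_AW l (compl_rel e) ->
  forall z, exists q, in_TogNum l e [set: T] 0 q /\
    exists k, (r%:R + t) * k = z + q.
Proof.
move=> AW z; case/(N_winnable_complP eirr): (AW (fun=> z)) => x Hx.
have Ax u : adjmul e x u = z + \sum_w x w.
  by apply/esym/subr0_eq; rewrite -addrA; apply: Hx.
have [m mE] := adjmul_const_mulr Ax.
case/in_TogNum_setTP: Tr => x0 [Ax0 Sx0].
exists (\sum_w (x w + m * x0 w)); split.
  apply/in_TogNum_setTP; exists (fun w => x w + m * x0 w); split=> // u.
  by rewrite adjmulD adjmulZ Ax mE -(addr0_eq (Ax0 u)); ring.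
by exists m; rewrite big_split /= -mulr_sumr Sx0 addrA mE; ring.
Qed.

Lemma N_AW_compl_of_shift_congr :
  (forall pi, exists s, A_winnable l e (shift_lab pi s)) ->
  (forall z, exists q, in_TogNum l e [set: T] 0 q /\
     exists k, (r%:R + t) * k = z + q) ->
  N_AW l (compl_rel e).
Proof.
move=> shiftW congrW pi; apply/(N_winnable_complP eirr).
have [s /A_winnableP [y Ay]] := shiftW pi.
have [q [/in_TogNum_setTP [u0 [Au0 Su0]] [k Hk]]] := congrW (- \sum_w y w - s).
have qE : q = (r%:R + t) * k + \sum_w y w + s by rewrite Hk; ring.
case/in_TogNum_setTP: Tr => x0 [Ax0 Sx0].
exists (fun w => - y w - k * x0 w + u0 w) => u.
rewrite !big_split !sumrN /= -mulr_sumr Sx0 Su0 !adjmulD !adjmulN adjmulZ.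
rewrite -(addr0_eq (Ay u)) -(addr0_eq (Ax0 u)) -(addr0_eq (Au0 u)) qE /shift_lab.
ring.
Qed.

End ComplementNeighborhoodGame.

Theorem theorem3p6 (l : nat) (hl : (1 < l)%N) (T : finType) (e : rel T)
  (esym : symmetric e) (eirr : irreflexive e)
  (p v : T) (hpv : e p v) (hpend : forall w, e p w -> w = v) :
  (A_AW l e <-> A_AW l (induced_del2 e p v)) /\
  (forall (r : nat) (t : 'Z_l),
     (0 < r)%N ->
     (exists t0, in_TogNum l e [set: T] r%:R t0) ->
     (forall r' : nat, (0 < r')%N -> (r' < r)%N ->
        ~ exists t0, in_TogNum l e [set: T] r'%:R t0) ->
     in_TogNum l e [set: T] r%:R t ->
     (N_AW l (compl_rel e) <->
        ((forall pi : T -> 'Z_l, exists s : 'Z_l, A_winnable l e (shift_lab pi s)) /\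
         (forall z : 'Z_l, exists q : 'Z_l, in_TogNum l e [set: T] 0 q /\
             exists x : 'Z_l, (r%:R + t) * x = z + q)))).
Proof.
split; first by split; [exact: A_AW_del2 | exact: A_AW_of_del2].
move=> r t r_gt0 _ r_min Tr; split.
  move=> AW; split; first exact: shift_winnable_of_N_AW_compl.
  exact: congr_of_N_AW_compl.
by case; exact: N_AW_compl_of_shift_congr.
Qed.
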